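(* Let $a_0\geq1$ and $a_1,a_2,\dots$ be positive integers such that $a_{2k}\leq 3a_0-2$ for all $k\geq1$. Let $\ell=[a_0;a_1,a_2,\dots]$ (an irrational number) and $\theta=e^{2/\ell}$. Then $\mathcal A_\theta=\emptyset$.
   Context: $\lfloor x\rfloor$ is the floor of $x$; $\log$ is the natural logarithm. For real $\theta>1$ and positive integer $n$, $M'_\theta(n)=\left\lfloor 1/(\theta^{1/n}-1)\right\rfloor$, and $\mathcal A_\theta=\{n\in\mathbb N: M'_\theta(n)\neq \lfloor n/\log\theta-1/2\rfloor\}$, where $\mathbb N$ is the set of positive integers. $[a_0;a_1,a_2,\dots]$ denotes an infinite simple continued fraction. *)

From Stdlib Require Import Reals ZArith Lra Lia.
Open Scope R_scope.

(* floor of a real number: up x is the unique integer with x < up x <= x + 1 *)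
Definition Rfloor (x : R) : Z := (up x - 1)%Z.

Definition Mprime (theta : R) (n : nat) : Z :=
  Rfloor (/ (Rpower theta (/ INR n) - 1)).

Definition in_A (theta : R) (n : nat) : Prop :=
  (1 <= n)%nat /\ Mprime theta n <> Rfloor (INR n / ln theta - / 2).

Fixpoint cf_tail (a : nat -> nat) (k m : nat) : R :=
  match m with
  | O => INR (a k)
  | S m' => INR (a k) + / cf_tail a (S k) m'
  end.

Definition convergent (a : nat -> nat) (n : nat) : R := cf_tail a 0 n.

Definition cf_value (a : nat -> nat) (l : R) : Prop := Un_cv (convergent a) l.

From Stdlib Require Import Reals ZArith Lra Lia Psatz.
From Coquelicot Require Import Coquelicot.
Open Scope R_scope.

(* With x = 2 / (n l), M'(n) = floor (1 / (e^x - 1)) and the Pade bounds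
   1/x - 1/2 < 1/(e^x - 1) < 1/x - 1/2 + x/12 show that the two floors can only
   differ if some integer m satisfies 0 < (2m + 1) - n l < 1 / (3 n l).  The theory
   of best approximations rules this out: every p / n > l has
   n (p - n l) >= 1 / (3 a_0) > 1 / (3 l).  Convergents with p / n > l are
   p_j / q_j with j odd, and for those the bound comes from
   n (p - n l) >= q_j / (q_j z_{j+1} + q_{j-1}) with z_{j+1} < a_{j+1} + 1 <= 3 a_0 - 1,
   which is where the hypothesis on the even-indexed a_{2k} enters. *)

(* Indices are shifted by one: index 0 holds p_{-1} = 1, q_{-1} = 0, and
   cf_num a (S i) / cf_den a (S i) is the convergent [a_0; ...; a_i]. *)
Fixpoint cf_den (a : nat -> nat) (j : nat) : Z :=
  match j with
  | O => 0%Z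
  | S j' => match j' with
            | O => 1%Z
            | S j'' => (Z.of_nat (a j') * cf_den a j' + cf_den a j'')%Z
            end
  end.

Fixpoint cf_num (a : nat -> nat) (j : nat) : Z :=
  match j with
  | O => 1%Z
  | S j' => match j' with
            | O => Z.of_nat (a 0%nat)
            | S j'' => (Z.of_nat (a j') * cf_num a j' + cf_num a j'')%Z
            end
  end.

Definition alt_sign (j : nat) : Z := if Nat.even j then 1%Z else (-1)%Z.

Lemma alt_sign_S j : alt_sign (S j) = (- alt_sign j)%Z.
Proof. unfold alt_sign; rewrite Nat.even_succ, <- Nat.negb_even; now destruct (Nat.even j). Qed.

Lemma Un_cv_const c : Un_cv (fun _ => c) c.
Proof. intros eps Heps; exists O; intros; unfold Rdist; rewrite Rminus_diag, Rabs_R0; lra. Qed.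

Lemma Rabs_IZR_ge1 (x : Z) : x <> 0%Z -> 1 <= Rabs (IZR x).
Proof. intros Hx; rewrite Rabs_Zabs; apply IZR_le; lia. Qed.

Lemma Rabs_le_Rabs_add (u v : R) : 0 <= u * v -> Rabs u <= Rabs (u + v).
Proof. intros H; unfold Rabs; destruct (Rcase_abs u), (Rcase_abs (u + v)); nra. Qed.

Section ContinuedFraction.

Variable a : nat -> nat.
Hypothesis hapos : forall k : nat, (1 <= a k)%nat.

Local Notation q := (cf_den a).
Local Notation p := (cf_num a).

Lemma cf_den_rec j : q (S (S j)) = (Z.of_nat (a (S j)) * q (S j) + q j)%Z.
Proof. reflexivity. Qed.

Lemma cf_num_rec j : p (S (S j)) = (Z.of_nat (a (S j)) * p (S j) + p j)%Z.
Proof. reflexivity. Qed.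

Lemma cf_den_mono j : (0 <= q j /\ 1 <= q (S j) /\ q j <= q (S j))%Z.
Proof.
  induction j as [|j IH]; [simpl; lia|].
  rewrite cf_den_rec; pose proof (hapos (S j)); nia.
Qed.

Lemma cf_den_ge_half j : (Z.of_nat j <= q (S (2 * j)))%Z.
Proof.
  induction j as [|j IH]; [simpl; lia|].
  replace (S (2 * S j)) with (S (S (S (2 * j)))) by lia.
  rewrite cf_den_rec; pose proof (hapos (S (S (2 * j)))); pose proof (cf_den_mono (S (2 * j))); nia.
Qed.

Lemma cf_den_bracket (n : Z) : (1 <= n)%Z -> exists j, (1 <= j)%nat /\ (q j <= n < q (S j))%Z.
Proof.
  intros Hn.
  assert (Hm : forall m, (n < q (S m))%Z -> exists j, (1 <= j)%nat /\ (q j <= n < q (S j))%Z).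
  { induction m as [|m IH]; intros Hlt; [simpl in Hlt; lia|].
    destruct (Z_lt_le_dec n (q (S m))) as [h|h]; [now apply IH|].
    exists (S m); split; lia. }
  apply (Hm (2 * S (Z.to_nat n))%nat); pose proof (cf_den_ge_half (S (Z.to_nat n))); lia.
Qed.

Lemma cf_det j : (p (S j) * q j - p j * q (S j))%Z = (- alt_sign j)%Z.
Proof.
  induction j as [|j IH]; [simpl; ring|].
  rewrite cf_num_rec, cf_den_rec, alt_sign_S, <- IH; ring.
Qed.

Lemma INR_a_ge1 k : 1 <= INR (a k).
Proof. apply (le_INR 1), hapos. Qed.

Lemma cf_tail_bounds m k : INR (a k) <= cf_tail a k m <= INR (a k) + 1.
Proof.
  revert k; induction m as [|m IH]; intros k; simpl; [lra|].
  destruct (IH (S k)); pose proof (INR_a_ge1 (S k)).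
  assert (0 < / cf_tail a (S k) m) by (apply Rinv_0_lt_compat; lra).
  assert (/ cf_tail a (S k) m <= 1) by (rewrite <- Rinv_1; apply Rinv_le_contravar; lra).
  lra.
Qed.

Lemma cf_tail_lim_gt k L : Un_cv (cf_tail a k) L -> INR (a k) < L.
Proof.
  intros HL.
  assert (Hlow : INR (a k) + / (INR (a (S k)) + 1) <= L).
  { apply (@Rle_cv_lim (fun _ => INR (a k) + / (INR (a (S k)) + 1)) (fun m => cf_tail a k (m + 1))).
    - intros m; rewrite Nat.add_1_r; simpl; apply Rplus_le_compat_l.
      destruct (cf_tail_bounds m (S k)); pose proof (INR_a_ge1 (S k)).
      apply Rinv_le_contravar; lra.
    - apply Un_cv_const.
    - exact (CV_shift' _ 1 _ HL). }
  pose proof (INR_a_ge1 (S k)); assert (0 < / (INR (a (S k)) + 1)) by (apply Rinv_0_lt_compat; lra).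
  lra.
Qed.

(* The complete quotients: zeta l k = [a_k; a_{k+1}, ...]. *)
Fixpoint zeta (l : R) (k : nat) : R :=
  match k with O => l | S k => / (zeta l k - INR (a k)) end.

Lemma cf_tail_cv_zeta l : Un_cv (cf_tail a 0) l -> forall k, Un_cv (cf_tail a k) (zeta l k).
Proof.
  intros hl; induction k as [|k IH]; [exact hl|].
  pose proof (cf_tail_lim_gt k _ IH).
  assert (Hcont : continuity_pt (fun t => / (t - INR (a k))) (zeta l k)) by (reg; lra).
  eapply Un_cv_ext; [|exact (continuity_seq _ _ _ Hcont (CV_shift' _ 1 _ IH))].
  intros m; simpl; rewrite Nat.add_1_r; simpl.
  replace (INR (a k) + / cf_tail a (S k) m - INR (a k)) with (/ cf_tail a (S k) m) by ring.
  apply Rinv_inv.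
Qed.

Variable l : R.
Hypothesis hl : Un_cv (cf_tail a 0) l.

Local Notation z := (zeta l).

Lemma zeta_gt k : INR (a k) < z k.
Proof. exact (cf_tail_lim_gt k _ (cf_tail_cv_zeta l hl k)). Qed.

Lemma zeta_pos k : 0 < z k.
Proof. pose proof (zeta_gt k); pose proof (INR_a_ge1 k); lra. Qed.

Lemma zeta_S k : z k = INR (a k) + / z (S k).
Proof. simpl; rewrite Rinv_inv; ring. Qed.

Lemma zeta_lt k : z k < INR (a k) + 1.
Proof.
  rewrite zeta_S; pose proof (zeta_gt (S k)); pose proof (INR_a_ge1 (S k)).
  apply Rplus_lt_compat_l; rewrite <- Rinv_1; apply Rinv_lt_contravar; lra.
Qed.

Definition zeta_comb (r : nat -> Z) j := IZR (r (S j)) * z (S j) + IZR (r j).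

Lemma zeta_comb_S (r : nat -> Z) :
  (forall j, r (S (S j)) = (Z.of_nat (a (S j)) * r (S j) + r j)%Z) ->
  forall j, zeta_comb r (S j) = zeta_comb r j * z (S (S j)).
Proof.
  intros hr j; unfold zeta_comb; rewrite hr, plus_IZR, mult_IZR, <- INR_IZR_INZ, (zeta_S (S j)).
  pose proof (zeta_pos (S (S j))); field; lra.
Qed.

Lemma zeta_comb_den_pos j : 0 < zeta_comb q j.
Proof.
  unfold zeta_comb; destruct (cf_den_mono j) as [h1 [h2 _]].
  apply IZR_le in h1; apply IZR_le in h2; pose proof (zeta_pos (S j)); nra.
Qed.

Lemma cf_value_zeta j : l * zeta_comb q j = zeta_comb p j.
Proof.
  induction j as [|j IH].
  - change (l * (1 * z 1 + 0) = IZR (Z.of_nat (a 0)) * z 1 + 1).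
    assert (Hl : l = INR (a 0) + / z 1) by exact (zeta_S 0).
    rewrite <- INR_IZR_INZ; pose proof (zeta_pos 1); set (z1 := z 1) in *.
    rewrite Hl; field; lra.
  - rewrite (zeta_comb_S q cf_den_rec), (zeta_comb_S p cf_num_rec), <- IH; ring.
Qed.

Definition approx_err j := IZR (q j) * l - IZR (p j).

Lemma approx_err_zeta j : approx_err (S j) * zeta_comb q j = IZR (alt_sign j).
Proof.
  assert (D := f_equal IZR (cf_det j)); rewrite minus_IZR, !mult_IZR, opp_IZR in D.
  transitivity (IZR (q (S j)) * (l * zeta_comb q j) - IZR (p (S j)) * zeta_comb q j);
    [unfold approx_err; ring|].
  rewrite cf_value_zeta; unfold zeta_comb; lra.
Qed.

Lemma approx_err_sign j : 0 < IZR (alt_sign j) * approx_err (S j).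
Proof.
  pose proof (approx_err_zeta j); pose proof (zeta_comb_den_pos j).
  unfold alt_sign in *; destruct (Nat.even j); nra.
Qed.

Lemma approx_err_alternate j : approx_err (S j) * approx_err (S (S j)) < 0.
Proof.
  pose proof (approx_err_sign j); pose proof (approx_err_sign (S j)) as HS.
  rewrite alt_sign_S, opp_IZR in HS; unfold alt_sign in *; destruct (Nat.even j); nra.
Qed.

Lemma best_approx i (n m : Z) : (1 <= i)%nat -> (1 <= n)%Z -> (n < q (S i))%Z ->
  Rabs (approx_err i) <= Rabs (IZR n * l - IZR m).
Proof.
  intros Hi Hn Hlt.
  set (D := (p (S i) * q i - p i * q (S i))%Z).
  assert (HD : (D * D = 1)%Z) by (unfold D; rewrite cf_det; unfold alt_sign; destruct (Nat.even i); lia).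
  set (x := (D * (n * p (S i) - m * q (S i)))%Z).
  set (y := (D * (m * q i - n * p i))%Z).
  assert (En : n = (x * q i + y * q (S i))%Z).
  { transitivity (D * D * n)%Z; [rewrite HD; ring|]. unfold x, y, D; ring. }
  assert (Em : m = (x * p i + y * p (S i))%Z).
  { transitivity (D * D * m)%Z; [rewrite HD; ring|]. unfold x, y, D; ring. }
  assert (Er : IZR n * l - IZR m = IZR x * approx_err i + IZR y * approx_err (S i)).
  { rewrite En, Em; unfold approx_err; rewrite !plus_IZR, !mult_IZR; ring. }
  rewrite Er; clearbody x y.
  destruct i as [|j]; [lia|].
  pose proof (approx_err_alternate j) as Halt.
  pose proof (cf_den_mono (S j)); pose proof (cf_den_mono j).
  pose proof (Rabs_pos (approx_err (S j))).
  destruct (Z.eq_dec y 0) as [Hy|Hy].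
  - subst y; rewrite Rmult_0_l, Rplus_0_r, Rabs_mult.
    assert (Hx : x <> 0%Z) by (intro; subst; lia).
    pose proof (Rabs_IZR_ge1 x Hx); nra.
  - (* 0 < n < q (S i) forces opposite signs on x and y, just as on the two errors *)
    assert (Hx : x <> 0%Z) by (intro; subst x; nia).
    assert (Hxy : (x * y < 0)%Z) by nia.
    apply IZR_lt in Hxy; rewrite mult_IZR in Hxy.
    eapply Rle_trans; [|apply Rabs_le_Rabs_add; nra].
    rewrite Rabs_mult; pose proof (Rabs_IZR_ge1 x Hx); nra.
Qed.

Hypothesis heven : forall k : nat, (1 <= k)%nat -> (a (2 * k) <= 3 * a 0 - 2)%nat.

Lemma approx_err_odd_lower j : Nat.even j = false ->
  1 < 3 * INR (a 0) * (IZR (q (S j)) * - approx_err (S j)).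
Proof.
  intros Hj.
  assert (Ha : INR (a (S j)) <= 3 * INR (a 0) - 2).
  { assert (Hev : Nat.even (S j) = true) by (rewrite Nat.even_succ, <- Nat.negb_even, Hj; reflexivity).
    apply Nat.even_spec in Hev; destruct Hev as [k Hk].
    pose proof (heven k ltac:(lia)) as Hb; rewrite <- Hk in Hb.
    pose proof (hapos 0); apply le_INR in Hb; rewrite minus_INR, mult_INR in Hb by lia.
    simpl in Hb; lra. }
  pose proof (approx_err_zeta j) as He; unfold alt_sign in He; rewrite Hj in He.
  pose proof (zeta_comb_den_pos j); pose proof (zeta_lt (S j)).
  destruct (cf_den_mono j) as [h1 [h2 h3]]; apply IZR_le in h1, h2, h3.
  assert (Hc : zeta_comb q j < 3 * INR (a 0) * IZR (q (S j))) by (unfold zeta_comb; nra).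
  assert (0 < - approx_err (S j)) by nra.
  nra.
Qed.

Lemma approx_lower_bound_convergent j (n m : Z) : (q (S j) <= n)%Z ->
  IZR n * l < IZR m -> (m * q (S j) = n * p (S j))%Z ->
  1 <= 3 * INR (a 0) * (IZR n * (IZR m - IZR n * l)).
Proof.
  intros Hqn Hm Eq; set (t := IZR m - IZR n * l).
  assert (Ht : 0 < t) by (unfold t; lra).
  assert (HQ : 1 <= IZR (q (S j)) <= IZR n).
  { pose proof (cf_den_mono j); split; apply IZR_le; lia. }
  apply (f_equal IZR) in Eq; rewrite !mult_IZR in Eq.
  assert (Et : IZR (q (S j)) * t = IZR n * - approx_err (S j)) by (unfold t, approx_err; nra).
  assert (HE : 0 < - approx_err (S j)) by nra.
  destruct (Nat.even j) eqn:Ej.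
  - pose proof (approx_err_sign j) as Hs; unfold alt_sign in Hs; rewrite Ej in Hs; nra.
  - pose proof (approx_err_odd_lower j Ej); pose proof (INR_a_ge1 0).
    assert (IZR (q (S j)) * (IZR n * t - IZR (q (S j)) * - approx_err (S j))
            = (IZR n - IZR (q (S j))) * (IZR n + IZR (q (S j))) * - approx_err (S j)) by nra.
    assert (IZR (q (S j)) * - approx_err (S j) <= IZR n * t) by nra.
    nra.
Qed.

Lemma approx_lower_bound (n m : Z) : (1 <= n)%Z -> IZR n * l < IZR m ->
  1 <= 3 * INR (a 0) * (IZR n * (IZR m - IZR n * l)).
Proof.
  intros Hn Hm.
  destruct (cf_den_bracket n Hn) as [[|j] [Hi [Hq1 Hq2]]]; [lia|].
  destruct (Z.eq_dec (m * q (S j)) (n * p (S j))) as [Eq|Neq].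
  { exact (approx_lower_bound_convergent j n m Hq1 Hm Eq). }
  set (t := IZR m - IZR n * l).
  assert (Ht : 0 < t) by (unfold t; lra).
  assert (Hn1 : 1 <= IZR n) by (apply IZR_le; lia).
  assert (HQ : 1 <= IZR (q (S j)) <= IZR n).
  { pose proof (cf_den_mono j); split; apply IZR_le; lia. }
  assert (Hbest := best_approx (S j) n m Hi Hn Hq2).
  replace (IZR n * l - IZR m) with (- t) in Hbest by (unfold t; ring).
  rewrite Rabs_Ropp, (Rabs_pos_eq t) in Hbest by lra.
  assert (Hne : (m * q (S j) - n * p (S j))%Z <> 0%Z) by lia.
  pose proof (Rabs_IZR_ge1 _ Hne) as H1.
  rewrite minus_IZR, !mult_IZR in H1.
  replace (IZR m * IZR (q (S j)) - IZR n * IZR (p (S j)))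
    with (IZR (q (S j)) * t + IZR n * approx_err (S j)) in H1 by (unfold t, approx_err; ring).
  pose proof (Rabs_triang (IZR (q (S j)) * t) (IZR n * approx_err (S j))) as T.
  rewrite !Rabs_mult, (Rabs_pos_eq (IZR n)), (Rabs_pos_eq (IZR (q (S j)))), (Rabs_pos_eq t) in T by lra.
  assert (1 <= 2 * (IZR n * t)) by nra.
  pose proof (INR_a_ge1 0); nra.
Qed.

End ContinuedFraction.

Lemma pos_of_deriv_pos (f f' : R -> R) : f 0 = 0 -> (forall t, is_derive f t (f' t)) ->
  (forall t, 0 < t -> 0 < f' t) -> forall x, 0 < x -> 0 < f x.
Proof.
  intros H0 Hd Hpos x Hx.
  destruct (MVT_cor2 f f' 0 x Hx (fun c _ => proj1 (is_derive_Reals _ _ _) (Hd c))) as [c [Hc [Hc0 _]]].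
  pose proof (Hpos c Hc0); nra.
Qed.

Lemma exp_sub1_upper x : 0 < x -> (exp x - 1) * (2 - x) < 2 * x.
Proof.
  intros Hx.
  assert (H1 : forall t, 0 < t -> 0 < 1 - exp t * (1 - t)).
  { apply (pos_of_deriv_pos _ (fun t => exp t * t)); [rewrite exp_0; ring| |].
    - intros t; auto_derive; [auto|ring].
    - intros t Ht; pose proof (exp_pos t); nra. }
  enough (0 < 2 * x - (exp x - 1) * (2 - x)) by lra.
  apply (pos_of_deriv_pos (fun t => 2 * t - (exp t - 1) * (2 - t)) (fun t => 1 - exp t * (1 - t)));
    [rewrite exp_0; ring| |exact H1|exact Hx].
  intros t; auto_derive; [auto|ring].
Qed.

(* Each auxiliary inequality is the derivative of the next one. *)
Lemma exp_sub1_lower x : 0 < x -> 12 * x < (exp x - 1) * (x * x - 6 * x + 12).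
Proof.
  intros Hx.
  assert (H1 : forall t, 0 < t -> 0 < exp t * (t * t - 2 * t + 2) - 2).
  { apply (pos_of_deriv_pos _ (fun t => exp t * (t * t))); [rewrite exp_0; ring| |].
    - intros t; auto_derive; [auto|ring].
    - intros t Ht; apply Rmult_lt_0_compat; [apply exp_pos|nra]. }
  assert (H2 : forall t, 0 < t -> 0 < exp t * (t * t - 4 * t + 6) - 2 * t - 6).
  { apply (pos_of_deriv_pos _ (fun t => exp t * (t * t - 2 * t + 2) - 2));
      [rewrite exp_0; ring| |exact H1].
    intros t; auto_derive; [auto|ring]. }
  enough (0 < (exp x - 1) * (x * x - 6 * x + 12) - 12 * x) by lra.
  apply (pos_of_deriv_pos (fun t => (exp t - 1) * (t * t - 6 * t + 12) - 12 * t)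
                             (fun t => exp t * (t * t - 4 * t + 6) - 2 * t - 6));
    [rewrite exp_0; ring| |exact H2|exact Hx].
  intros t; auto_derive; [auto|ring].
Qed.

Lemma inv_exp_sub1_bounds x : 0 < x -> / x - / 2 < / (exp x - 1) < / x - / 2 + x / 12.
Proof.
  intros Hx; pose proof (exp_sub1_upper x Hx); pose proof (exp_sub1_lower x Hx).
  assert (HE : 0 < exp x - 1) by (pose proof (exp_ineq1 x ltac:(lra)); lra).
  set (E := exp x - 1) in *; split.
  - assert (Eq : (/ E - (/ x - / 2)) * (2 * x * E) = 2 * x - E * (2 - x)) by (field; lra).
    assert (0 < 2 * x * E) by nra; nra.
  - assert (Eq : (/ x - / 2 + x / 12 - / E) * (12 * x * E) = E * (x * x - 6 * x + 12) - 12 * x)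
      by (field; lra).
    assert (0 < 12 * x * E) by nra; nra.
Qed.

Lemma Rfloor_eq y w : y <= w -> w < IZR (up y) -> Rfloor w = Rfloor y.
Proof.
  intros Hyw Hw; destruct (archimed y); unfold Rfloor.
  rewrite <- (tech_up w (up y)); [reflexivity | exact Hw | lra].
Qed.

Lemma Mprime_exp_eq (l : R) (n : nat) : 0 < l -> (1 <= n)%nat ->
  (forall m : Z, INR n * l < IZR (2 * m + 1) ->
     1 <= 3 * l * (INR n * (IZR (2 * m + 1) - INR n * l))) ->
  Mprime (exp (2 / l)) n = Rfloor (INR n / ln (exp (2 / l)) - / 2).
Proof.
  intros Hl Hn Hodd.
  assert (HnR : 1 <= INR n) by (apply (le_INR 1); exact Hn).
  set (x := / INR n * (2 / l)).
  assert (Hx : 0 < x).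
  { unfold x; apply Rmult_lt_0_compat; [apply Rinv_0_lt_compat | apply Rdiv_lt_0_compat]; lra. }
  unfold Mprime, Rpower; rewrite ln_exp; fold x.
  replace (INR n / (2 / l) - / 2) with (/ x - / 2) by (unfold x; field; lra).
  destruct (inv_exp_sub1_bounds x Hx) as [Hlow Hup].
  apply Rfloor_eq; [lra|].
  destruct (Rlt_le_dec (/ (exp x - 1)) (IZR (up (/ x - / 2)))) as [ok|Hm]; [exact ok|exfalso].
  destruct (archimed (/ x - / 2)) as [Hm0 _]; set (m := up (/ x - / 2)) in *.
  assert (Hinvx : / x = INR n * l / 2) by (unfold x; field; lra).
  assert (Hlt : INR n * l < IZR (2 * m + 1)) by (rewrite plus_IZR, mult_IZR; lra).
  pose proof (Hodd m Hlt) as Hb; rewrite plus_IZR, mult_IZR in Hb.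
  assert (Hnt : INR n * (2 * IZR m + 1 - INR n * l) < INR n * (x / 6))
    by (apply Rmult_lt_compat_l; lra).
  replace (INR n * (x / 6)) with (/ (3 * l)) in Hnt by (unfold x; field; lra).
  apply (Rmult_lt_compat_l (3 * l)) in Hnt; [|lra].
  rewrite Rinv_r in Hnt by lra; lra.
Qed.

Theorem mainTheorem6 (a : nat -> nat) (l : R)
  (ha0 : (1 <= a 0)%nat)
  (hapos : forall k : nat, (1 <= a k)%nat)
  (heven : forall k : nat, (1 <= k)%nat -> (a (2 * k) <= 3 * a 0 - 2)%nat)
  (hl : cf_value a l) :
  forall n : nat, ~ in_A (exp (2 / l)) n.
Proof.
  intros n [Hn Hne]; apply Hne.
  pose proof (zeta_gt a hapos l hl 0) as Hl0; simpl in Hl0.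
  pose proof (INR_a_ge1 a hapos 0).
  apply Mprime_exp_eq; [lra | exact Hn |].
  intros m Hlt.
  rewrite INR_IZR_INZ in Hlt |- *.
  pose proof (approx_lower_bound a hapos l hl heven (Z.of_nat n) (2 * m + 1) ltac:(lia) Hlt).
  assert (0 < IZR (Z.of_nat n) * (IZR (2 * m + 1) - IZR (Z.of_nat n) * l)).
  { apply Rmult_lt_0_compat; [apply IZR_lt; lia | lra]. }
  nra.
Qed.
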